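(* Let $\Delta$ be a finite saturated sample set, $\delta$ a $\Delta$-diagram, and $t_1,t_2$ basic terms. If the time warps $f_1$ and $f_2$ strongly extend $D_{t_1}(\delta)$ and $D_{t_2}(\delta)$, respectively, then $f_1\circ f_2$ strongly extends $D_{t_1t_2}(\delta)$.
   Context: Time warps: join-preserving maps $f\colon\omega^+\to\omega^+$, $\omega^+=\omega\cup\{\omega\}$; $\mathrm{last}(f)=\min\{m\in\omega^+\mid f(m)=f(\omega)\}$. Basic terms are built from variables using $\cdot,{}',1$. Samples (formal expressions): $\alpha::=\kappa\mid t[\alpha]\mid \mathrm{suc}(\alpha)\mid\mathrm{last}(t)$ with $\kappa$ a time variable and $t$ a basic term. The relation $\leadsto$: $t[\alpha]\leadsto\alpha$, $\mathrm{suc}(\alpha)\leadsto\alpha$, $t[\alpha]\leadsto t[\mathrm{last}(t)]$, $(tu)[\alpha]\leadsto t[u[\alpha]]$, $t'[\alpha]\leadsto t[t'[\alpha]]$, $t'[\alpha]\leadsto t[\mathrm{suc}(t'[\alpha])]$; a sample set is saturated if closed under $\leadsto$. $S(n)=n+1$ for $n\in\omega$, $S(\omega)=\omega$. For saturated $\Delta$, a $\Delta$-diagram is $\delta\colon\Delta\to\omega^+$ such that, whenever the samples mentioned belong to $\Delta$: (1) $\delta(\alpha)\le\delta(\beta)\Rightarrow\delta(t[\alpha])\le\delta(t[\beta])$; (2) $\delta(\alpha)=0\Rightarrow\delta(t[\alpha])=0$; (3) $\delta(\mathrm{suc}(\alpha))=S(\delta(\alpha))$; (4) for $t[\alpha]\in\Delta$: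 $\delta(\mathrm{last}(t))\le\delta(\alpha)\iff\delta(t[\mathrm{last}(t)])=\delta(t[\alpha])$; (5) $\delta(\mathrm{last}(t))=\omega\Rightarrow\delta(t[\mathrm{last}(t)])=\omega$; (6) $\delta(1[\alpha])=\delta(\alpha)$; (7) $\delta(\mathrm{last}(1))=\omega$; (8) $\delta((tu)[\alpha])=\delta(t[u[\alpha]])$; (9) $\delta(\mathrm{last}(tu))=\omega\Rightarrow\delta(\mathrm{last}(t))=\delta(\mathrm{last}(u))=\omega$; (10) for $t'[\alpha]\in\Delta$: $0<\delta(\alpha)<\omega\Rightarrow\delta(t[t'[\alpha]])<\delta(\alpha)$; (11) for $t'[\alpha]\in\Delta$: $\delta(t'[\alpha])<\omega\Rightarrow\delta(\alpha)\le\delta(t[\mathrm{suc}(t'[\alpha])])$; (12) $\delta(\mathrm{last}(t'))=\omega\Rightarrow\delta(\mathrm{last}(t))=\omega$. For a basic term $t$, $D_t(\delta)=\{(\delta(\alpha),\delta(t[\alpha]))\mid t[\alpha]\in\Delta\}$. A time warp $f$ extends $D_t(\delta)$ if $f(i)=j$ for all $(i,j)\in D_t(\delta)$, and strongly extends it if moreover $D_t(\delta)\neq\emptyset$ and $\delta(\mathrm{last}(t))=\omega$ together imply $\mathrm{last}(f)=\omega$. *)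

From Stdlib Require Import List.

(* omega^+ = omega ∪ {omega} *)
Inductive wp : Type := Fin (n : nat) | Om.

Definition wle (x y : wp) : Prop :=
  match x, y with
  | Fin m, Fin n => m <= n
  | _, Om => True
  | Om, Fin _ => False
  end.

Definition wlt (x y : wp) : Prop := wle x y /\ x <> y.

Definition wS (x : wp) : wp := match x with Fin n => Fin (S n) | Om => Om end.

Definition is_lub (S : wp -> Prop) (x : wp) : Prop :=
  (forall y, S y -> wle y x) /\ (forall z, (forall y, S y -> wle y z) -> wle x z).

Definition time_warp (f : wp -> wp) : Prop :=
  forall (S : wp -> Prop) (x : wp),
    is_lub S x -> is_lub (fun y => exists z, S z /\ y = f z) (f x).

Definition is_last (f : wp -> wp) (m : wp) : Prop :=
  f m = f Om /\ forall k, f k = f Om -> wle m k.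

Inductive term : Type :=
| TVar (x : nat)
| TMul (t u : term)
| TPrime (t : term)
| TOne.

Inductive sample : Type :=
| SVar (k : nat)
| SApp (t : term) (a : sample)
| SSuc (a : sample)
| SLast (t : term).

Inductive leadsto : sample -> sample -> Prop :=
| ls_app t a : leadsto (SApp t a) a
| ls_suc a : leadsto (SSuc a) a
| ls_last t a : leadsto (SApp t a) (SApp t (SLast t))
| ls_mul t u a : leadsto (SApp (TMul t u) a) (SApp t (SApp u a))
| ls_prime1 t a : leadsto (SApp (TPrime t) a) (SApp t (SApp (TPrime t) a))
| ls_prime2 t a : leadsto (SApp (TPrime t) a) (SApp t (SSuc (SApp (TPrime t) a))).

Definition sample_set := sample -> Prop.

Definition finite_set (D : sample_set) : Prop :=
  exists l : list sample, forall a, D a <-> In a l.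

Definition saturated (D : sample_set) : Prop :=
  forall a b, D a -> leadsto a b -> D b.

(* A Delta-diagram; delta is given as a total function, only its values on
   Delta matter. Each condition is imposed whenever the samples mentioned
   belong to Delta. *)
Definition diagram (D : sample_set) (d : sample -> wp) : Prop :=
  (forall t a b, D a -> D b -> D (SApp t a) -> D (SApp t b) ->
     wle (d a) (d b) -> wle (d (SApp t a)) (d (SApp t b))) /\
  (forall t a, D a -> D (SApp t a) -> d a = Fin 0 -> d (SApp t a) = Fin 0) /\
  (forall a, D a -> D (SSuc a) -> d (SSuc a) = wS (d a)) /\
  (forall t a, D (SApp t a) -> D a -> D (SLast t) -> D (SApp t (SLast t)) ->
     (wle (d (SLast t)) (d a) <-> d (SApp t (SLast t)) = d (SApp t a))) /\
  (forall t, D (SLast t) -> D (SApp t (SLast t)) ->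
     d (SLast t) = Om -> d (SApp t (SLast t)) = Om) /\
  (forall a, D a -> D (SApp TOne a) -> d (SApp TOne a) = d a) /\
  (D (SLast TOne) -> d (SLast TOne) = Om) /\
  (forall t u a, D (SApp (TMul t u) a) -> D (SApp t (SApp u a)) ->
     d (SApp (TMul t u) a) = d (SApp t (SApp u a))) /\
  (forall t u, D (SLast (TMul t u)) -> D (SLast t) -> D (SLast u) ->
     d (SLast (TMul t u)) = Om -> d (SLast t) = Om /\ d (SLast u) = Om) /\
  (forall t a, D (SApp (TPrime t) a) -> D a -> D (SApp t (SApp (TPrime t) a)) ->
     wlt (Fin 0) (d a) -> wlt (d a) Om ->
     wlt (d (SApp t (SApp (TPrime t) a))) (d a)) /\
  (forall t a, D (SApp (TPrime t) a) -> D a ->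
     D (SApp t (SSuc (SApp (TPrime t) a))) ->
     wlt (d (SApp (TPrime t) a)) Om ->
     wle (d a) (d (SApp t (SSuc (SApp (TPrime t) a))))) /\
  (forall t, D (SLast (TPrime t)) -> D (SLast t) ->
     d (SLast (TPrime t)) = Om -> d (SLast t) = Om).

Definition Dt (D : sample_set) (d : sample -> wp) (t : term) (p : wp * wp) : Prop :=
  exists a, D (SApp t a) /\ p = (d a, d (SApp t a)).

Definition extends (f : wp -> wp) (R : wp * wp -> Prop) : Prop :=
  forall i j, R (i, j) -> f i = j.

Definition strongly_extends (D : sample_set) (d : sample -> wp) (t : term)
  (f : wp -> wp) : Prop :=
  extends f (Dt D d t) /\
  ((exists p, Dt D d t p) -> d (SLast t) = Om -> is_last f Om).

(* A time warp preserves the join of the finite points, so [f ω] is the join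
   of the [f n]. A finite join in ω⁺ is attained, hence [last f = ω] forces
   [f ω = ω]. Together with condition (9) of the diagram this gives
   [last (f1 ∘ f2) = ω]; the extension property itself is condition (8). *)
From Stdlib Require Import Lia.

Lemma wle_Om_l (x : wp) : wle Om x -> x = Om.
Proof. destruct x; simpl; tauto. Qed.

Lemma is_lub_Fin_Om : is_lub (fun y => exists n, y = Fin n) Om.
Proof.
  split.
  - intros y _. destruct y; exact I.
  - intros [k|] Hub; [|exact I].
    specialize (Hub (Fin (S k)) (ex_intro _ _ eq_refl)). simpl in Hub. lia.
Qed.

Lemma is_lub_Fin_attained (P : wp -> Prop) (m : nat) (y0 : wp) :
  is_lub P (Fin m) -> P y0 -> ~ (forall y, P y -> y <> Fin m).
Proof.
  intros [Hub Hleast] Hy0 Hne.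
  assert (Hbelow : forall y, P y -> exists k, y = Fin k /\ k < m).
  { intros y Hy. specialize (Hne y Hy). specialize (Hub y Hy).
    destruct y as [k|]; simpl in Hub; [|contradiction].
    exists k. split; [reflexivity|]. assert (k <> m) by congruence. lia. }
  destruct m as [|m].
  - destruct (Hbelow y0 Hy0) as [k [_ Hk]]. lia.
  - assert (H : wle (Fin (S m)) (Fin m)).
    { apply Hleast. intros y Hy. destruct (Hbelow y Hy) as [k [-> Hk]].
      simpl. lia. }
    simpl in H. lia.
Qed.

Lemma time_warp_Om_of_last_Om (f : wp -> wp) :
  time_warp f -> is_last f Om -> f Om = Om.
Proof.
  intros Hf [_ Hlast].
  set (P := fun y => exists z, (exists n, z = Fin n) /\ y = f z).
  assert (Hlub : is_lub P (f Om)) by exact (Hf _ _ is_lub_Fin_Om).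
  destruct (f Om) as [m|] eqn:Ef; [exfalso|reflexivity].
  apply (is_lub_Fin_attained P m (f (Fin 0)) Hlub).
  - exists (Fin 0). split; [exists 0|]; reflexivity.
  - intros y [z [[n ->] ->]] Hn.
    exact (Hlast (Fin n) Hn).
Qed.

Lemma is_last_comp_Om (f1 f2 : wp -> wp) :
  is_last f1 Om -> is_last f2 Om -> f2 Om = Om ->
  is_last (fun x => f1 (f2 x)) Om.
Proof.
  intros [_ L1] [_ L2] F2. split; [reflexivity|].
  intros k Hk. rewrite F2 in Hk.
  apply L2. rewrite F2. apply wle_Om_l, L1, Hk.
Qed.

Lemma Dt_app (D : sample_set) (d : sample -> wp) (t : term) (a : sample) :
  D (SApp t a) -> Dt D d t (d a, d (SApp t a)).
Proof. intro Ha. exists a. split; [exact Ha | reflexivity]. Qed.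

Section Saturated.

Variables (D : sample_set) (d : sample -> wp).
Hypothesis Dsat : saturated D.

Lemma saturated_app_arg (t : term) (a : sample) : D (SApp t a) -> D a.
Proof. intro Ha. exact (Dsat _ _ Ha (ls_app t a)). Qed.

Lemma saturated_app_last (t : term) (a : sample) :
  D (SApp t a) -> D (SLast t).
Proof.
  intro Ha. apply (saturated_app_arg t). exact (Dsat _ _ Ha (ls_last t a)).
Qed.

Lemma saturated_app_mul (t u : term) (a : sample) :
  D (SApp (TMul t u) a) -> D (SApp t (SApp u a)).
Proof. intro Ha. exact (Dsat _ _ Ha (ls_mul t u a)). Qed.

Hypothesis Ddiag : diagram D d.

Lemma diagram_app_mul (t u : term) (a : sample) :
  D (SApp (TMul t u) a) -> d (SApp (TMul t u) a) = d (SApp t (SApp u a)).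
Proof.
  intro Ha. destruct Ddiag as (_&_&_&_&_&_&_&H8&_).
  exact (H8 t u a Ha (saturated_app_mul t u a Ha)).
Qed.

Lemma diagram_last_mul (t u : term) (a : sample) :
  D (SApp (TMul t u) a) -> d (SLast (TMul t u)) = Om ->
  d (SLast t) = Om /\ d (SLast u) = Om.
Proof.
  intros Ha Hom. destruct Ddiag as (_&_&_&_&_&_&_&_&H9&_).
  pose proof (saturated_app_mul t u a Ha) as Hb.
  apply H9; trivial.
  - exact (saturated_app_last _ _ Ha).
  - exact (saturated_app_last _ _ Hb).
  - exact (saturated_app_last _ _ (saturated_app_arg _ _ Hb)).
Qed.

Lemma extends_Dt_mul (t1 t2 : term) (f1 f2 : wp -> wp) :
  extends f1 (Dt D d t1) -> extends f2 (Dt D d t2) ->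
  extends (fun x => f1 (f2 x)) (Dt D d (TMul t1 t2)).
Proof.
  intros E1 E2 i j [a [Ha Hp]]. injection Hp as -> ->.
  pose proof (saturated_app_mul t1 t2 a Ha) as Hb.
  rewrite (E2 _ _ (Dt_app D d t2 a (saturated_app_arg _ _ Hb))).
  rewrite (E1 _ _ (Dt_app D d t1 _ Hb)).
  symmetry. exact (diagram_app_mul t1 t2 a Ha).
Qed.

End Saturated.

Theorem lemma3p5 (D : sample_set) (d : sample -> wp) (t1 t2 : term)
  (f1 f2 : wp -> wp) :
  finite_set D -> saturated D -> diagram D d ->
  time_warp f1 -> time_warp f2 ->
  strongly_extends D d t1 f1 -> strongly_extends D d t2 f2 ->
  strongly_extends D d (TMul t1 t2) (fun x => f1 (f2 x)).
Proof.
  intros _ Dsat Ddiag _ Hf2 [E1 L1] [E2 L2].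
  split; [exact (extends_Dt_mul D d Dsat Ddiag t1 t2 f1 f2 E1 E2)|].
  intros [p [a [Ha _]]] Hom.
  destruct (diagram_last_mul D d Dsat Ddiag t1 t2 a Ha Hom) as [O1 O2].
  pose proof (saturated_app_mul D Dsat t1 t2 a Ha) as Hb.
  assert (I1 : is_last f1 Om).
  { apply L1; [exact (ex_intro _ _ (Dt_app D d t1 _ Hb)) | exact O1]. }
  assert (I2 : is_last f2 Om).
  { apply L2; [|exact O2].
    exact (ex_intro _ _ (Dt_app D d t2 a (saturated_app_arg D Dsat _ _ Hb))). }
  exact (is_last_comp_Om f1 f2 I1 I2 (time_warp_Om_of_last_Om f2 Hf2 I2)).
Qed.
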